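(* Let $F,G:\mathbb{R}\to\mathbb{C}$ be real-analytic functions such that $|F(x)|=|G(x)|$ and $|F'(x)|=|G'(x)|$ for every $x\in\mathbb{R}$. Then there exists $c\in\mathbb{C}$ with $|c|=1$ such that either $G(x)=cF(x)$ for all $x\in\mathbb{R}$, or $G(x)=c\overline{F(x)}$ for all $x\in\mathbb{R}$. *)

From Stdlib Require Import Reals.
From Coquelicot Require Import Coquelicot.

Definition real_analytic (F : R -> C) : Prop :=
  forall x0 : R, exists r : R, (0 < r)%R /\ exists a : nat -> C,
    forall x : R, (Rabs (x - x0) < r)%R ->
      @is_pseries R_AbsRing C_R_NormedModule a (x - x0)%R (F x).

Definition has_derivative_C (F : R -> C) (x : R) (l : C) : Prop :=
  @is_derive R_AbsRing C_R_NormedModule F x l.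

From Stdlib Require Import Reals Lra Psatz Classical.
From Coquelicot Require Import Coquelicot.
Open Scope R_scope.

(* Differentiating |F|^2 = |G|^2 gives
   Re (F' conj F) = Re (G' conj G); since also |F' conj F| = |G' conj G|, the
   imaginary parts agree up to sign.  Near a point where F does not vanish the
   sign is constant on some interval, and after replacing F by conj F if needed,
   F' conj F = G' conj G there.  This makes G / F constant of modulus 1 on the
   interval, and the identity theorem for real-analytic functions propagates
   G = c F (or G = c conj F) to the whole line. *)

Definition real_analytic_R (f : R -> R) : Prop :=
  forall x0, exists r, 0 < r /\ exists a : nat -> R,
    forall x, Rabs (x - x0) < r -> is_pseries a (x - x0) (f x).

Lemma Rabs_sign_mult (s t : R) : s = 1 \/ s = -1 -> Rabs (s * t) = Rabs t.
Proof.
  intros [-> | ->]; rewrite Rabs_mult; [rewrite Rabs_R1 | rewrite Rabs_left by lra]; ring.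
Qed.

Lemma continuity_pt_nonzero_near (k : R -> R) (y : R) :
  continuity_pt k y -> k y <> 0 ->
  exists e, 0 < e /\ forall z, Rabs (z - y) < e -> k z <> 0.
Proof.
  intros Hk Hy.
  destruct (proj1 (continuity_pt_locally k y) Hk (mkposreal _ (Rabs_pos_lt _ Hy)))
    as [e He].
  exists e; split; [apply cond_pos|].
  intros z Hz Hkz. specialize (He z Hz). simpl in He.
  rewrite Hkz, Rminus_0_l, Rabs_Ropp in He. lra.
Qed.

Lemma CV_radius_ge_of_ex_pseries (a : nat -> R) (r : R) :
  0 < r -> (forall t, Rabs t < r -> ex_pseries a t) -> Rbar_le r (CV_radius a).
Proof.
  intros Hr Hcv.
  assert (Hle : forall t, 0 <= t < r -> Rbar_le t (CV_radius a)).
  { intros t Ht. apply (proj1 (CV_radius_bounded a)).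
    destruct (Hcv t) as [l Hl]; [rewrite Rabs_pos_eq; lra|].
    assert (Hlim : is_lim_seq (fun n => a n * t ^ n) 0).
    { apply ex_series_lim_0. exists l. now apply is_pseries_R. }
    destruct (filterlim_bounded (fun n => a n * t ^ n)) as [M HM];
      [now exists 0|].
    now exists M. }
  destruct (CV_radius a) as [c| |] eqn:Hc; simpl; auto.
  - destruct (Rle_lt_dec r c); auto.
    assert (Hc0 : 0 <= c) by exact (Hle 0 ltac:(lra)).
    assert (Hmid : (c + r) / 2 <= c) by exact (Hle ((c + r) / 2) ltac:(lra)).
    lra.
  - exact (Hle 0 ltac:(lra)).
Qed.

Lemma PSeries_coef0_eq0 (a : nat -> R) (s d : R) :
  s = 1 \/ s = -1 -> 0 < d -> Rbar_le d (CV_radius a) ->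
  (forall t, 0 < t < d -> PSeries a (s * t) = 0) -> a 0%nat = 0.
Proof.
  intros Hs Hd Hcv Hzero.
  destruct (Req_dec (a 0%nat) 0) as [|Ha0]; auto. exfalso.
  assert (Hcont : continuity_pt (PSeries a) 0).
  { apply PSeries_continuity. rewrite Rabs_R0.
    eapply Rbar_lt_le_trans; [|exact Hcv]. exact Hd. }
  rewrite <- PSeries_0 in Ha0.
  destruct (continuity_pt_nonzero_near _ _ Hcont Ha0) as [e [He Hnz]].
  set (t := Rmin d e / 2).
  assert (Ht : 0 < t < Rmin d e) by (unfold t; apply Rmin_case; lra).
  apply (Hnz (s * t)).
  - rewrite Rminus_0_r, Rabs_sign_mult, Rabs_pos_eq by (auto; lra).
    generalize (Rmin_r d e); lra.
  - apply Hzero. generalize (Rmin_l d e); lra.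
Qed.

Lemma PSeries_coef_eq0 (n : nat) (a : nat -> R) (s d : R) :
  s = 1 \/ s = -1 -> 0 < d -> Rbar_le d (CV_radius a) ->
  (forall t, 0 < t < d -> PSeries a (s * t) = 0) -> a n = 0.
Proof.
  revert a. induction n as [|n IH]; intros a Hs Hd Hcv Hzero.
  - exact (PSeries_coef0_eq0 a s d Hs Hd Hcv Hzero).
  - assert (Ha0 : a 0%nat = 0) by exact (PSeries_coef0_eq0 a s d Hs Hd Hcv Hzero).
    change (a (S n)) with (PS_decr_1 a n).
    apply IH; [| |rewrite CV_radius_decr_1|]; auto.
    intros t Ht.
    assert (Hst : s * t <> 0) by (destruct Hs as [-> | ->]; lra).
    assert (Hex : ex_pseries a (s * t)).
    { apply CV_radius_inside. eapply Rbar_lt_le_trans; [|exact Hcv].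
      simpl. rewrite Rabs_sign_mult, Rabs_pos_eq; lra. }
    pose proof (PSeries_decr_1 a (s * t) Hex) as Hdecr.
    rewrite Hzero, Ha0 in Hdecr by lra.
    apply (Rmult_eq_reg_l (s * t)); auto. lra.
Qed.

Lemma real_analytic_R_CV_radius (f : R -> R) (x0 r : R) (a : nat -> R) :
  0 < r -> (forall x, Rabs (x - x0) < r -> is_pseries a (x - x0) (f x)) ->
  Rbar_le r (CV_radius a).
Proof.
  intros Hr Ha. apply CV_radius_ge_of_ex_pseries; auto.
  intros t Ht. exists (f (x0 + t)).
  pose proof (Ha (x0 + t)) as Hx. replace (x0 + t - x0) with t in Hx by ring.
  now apply Hx.
Qed.

(* Vanishing on a one-sided interval at z kills every Taylor coefficient at z. *)
Lemma real_analytic_R_zero_near (h : R -> R) (z d s : R) :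
  real_analytic_R h -> 0 < d -> s = 1 \/ s = -1 ->
  (forall t, 0 < t < d -> h (z + s * t) = 0) ->
  exists e, 0 < e /\ forall y, Rabs (y - z) < e -> h y = 0.
Proof.
  intros Hh Hd Hs Hzero. destruct (Hh z) as [r [Hr [a Ha]]].
  pose proof (real_analytic_R_CV_radius h z r a Hr Ha) as Hcv.
  assert (Hmin : 0 < Rmin d r) by (apply Rmin_case; lra).
  generalize (Rmin_l d r) (Rmin_r d r); intros Hmin_d Hmin_r.
  assert (Hcoef : forall n, a n = 0).
  { intros n. apply (PSeries_coef_eq0 n a s (Rmin d r)); auto.
    - eapply Rbar_le_trans; [|exact Hcv]. simpl. lra.
    - intros t Ht. rewrite <- (Hzero t) by lra. apply is_pseries_unique.
      pose proof (Ha (z + s * t)) as Hx. replace (z + s * t - z) with (s * t) in Hx by ring.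
      apply Hx. rewrite Rabs_sign_mult, Rabs_pos_eq; lra. }
  exists r. split; auto. intros y Hy.
  rewrite <- (is_pseries_unique _ _ _ (Ha y Hy)), <- (PSeries_const_0 (y - z)).
  apply PSeries_ext. exact Hcoef.
Qed.

(* A supremum argument: the zero set along the ray cannot stop at its supremum. *)
Lemma real_analytic_R_zero_ray (h : R -> R) (m e0 sg : R) :
  real_analytic_R h -> 0 < e0 -> sg = 1 \/ sg = -1 ->
  (forall y, Rabs (y - m) < e0 -> h y = 0) ->
  forall u, 0 <= u -> h (m + sg * u) = 0.
Proof.
  intros Hh He0 Hsg Hm.
  assert (Hstart : forall u, 0 <= u < e0 -> h (m + sg * u) = 0).
  { intros u Hu. apply Hm. replace (m + sg * u - m) with (sg * u) by ring.
    rewrite Rabs_sign_mult, Rabs_pos_eq; lra. }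
  intros x Hx. destruct (Req_dec (h (m + sg * x)) 0) as [|Hne]; auto. exfalso.
  set (E := fun t => 0 <= t /\ forall u, 0 <= u <= t -> h (m + sg * u) = 0).
  assert (Hbound : bound E).
  { exists x. intros t [Ht0 Ht]. destruct (Rle_lt_dec t x); auto.
    exfalso. apply Hne, Ht. lra. }
  assert (Hinh : exists t, E t) by (exists 0; split; [lra|intros u Hu; apply Hstart; lra]).
  destruct (completeness E Hbound Hinh) as [s [Hub Hlub]].
  assert (Hs : e0 / 2 <= s) by (apply Hub; split; [lra|intros u Hu; apply Hstart; lra]).
  assert (Hbelow : forall u, 0 <= u < s -> h (m + sg * u) = 0).
  { intros u Hu. destruct (classic (exists t, E t /\ u <= t)) as [[t [[_ Ht] Hut]]|Hn].
    - apply Ht; lra.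
    - assert (s <= u); [|lra]. apply Hlub. intros t Et.
      destruct (Rle_lt_dec t u); auto. exfalso. apply Hn. exists t; split; auto; lra. }
  destruct (real_analytic_R_zero_near h (m + sg * s) s (- sg)) as [e [He Hnear]]; auto.
  { lra. }
  { destruct Hsg as [-> | ->]; lra. }
  { intros t Ht. replace (m + sg * s + - sg * t) with (m + sg * (s - t)) by ring.
    apply Hbelow. lra. }
  assert (Hbeyond : E (s + e / 2)).
  { split; [lra|]. intros u Hu. destruct (Rlt_le_dec u s); [apply Hbelow; lra|].
    apply Hnear. replace (m + sg * u - (m + sg * s)) with (sg * (u - s)) by ring.
    rewrite Rabs_sign_mult, Rabs_pos_eq; lra. }
  specialize (Hub _ Hbeyond). lra.
Qed.

Theorem real_analytic_R_identity (h : R -> R) (a b : R) :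
  real_analytic_R h -> a < b -> (forall x, a < x < b -> h x = 0) ->
  forall x, h x = 0.
Proof.
  intros Hh Hab Hzero x. set (m := (a + b) / 2).
  assert (Hm : forall y, Rabs (y - m) < (b - a) / 2 -> h y = 0).
  { intros y Hy. apply Hzero. unfold m in Hy. apply Rabs_def2 in Hy. lra. }
  destruct (Rle_lt_dec m x).
  - replace x with (m + 1 * (x - m)) by ring.
    apply (real_analytic_R_zero_ray h m ((b - a) / 2)); auto; lra.
  - replace x with (m + (-1) * (m - x)) by ring.
    apply (real_analytic_R_zero_ray h m ((b - a) / 2)); auto; lra.
Qed.

Lemma real_analytic_R_plus (f g : R -> R) :
  real_analytic_R f -> real_analytic_R g -> real_analytic_R (fun x => f x + g x).
Proof.
  intros Hf Hg x0.
  destruct (Hf x0) as [r1 [Hr1 [a1 Ha1]]], (Hg x0) as [r2 [Hr2 [a2 Ha2]]].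
  exists (Rmin r1 r2). split; [apply Rmin_case; lra|]. exists (PS_plus a1 a2).
  intros x Hx. generalize (Rmin_l r1 r2) (Rmin_r r1 r2); intros.
  apply (is_pseries_plus a1 a2 (x - x0) (f x) (g x)); [apply Ha1 | apply Ha2]; lra.
Qed.

Lemma real_analytic_R_scal (c : R) (f : R -> R) :
  real_analytic_R f -> real_analytic_R (fun x => c * f x).
Proof.
  intros Hf x0. destruct (Hf x0) as [r [Hr [a Ha]]].
  exists r. split; auto. exists (PS_scal c a).
  intros x Hx. apply (is_pseries_scal c a (x - x0) (f x)); [apply Rmult_comm | auto].
Qed.

Lemma is_derive_continuity_pt (f : R -> R) (x l : R) :
  is_derive f x l -> continuity_pt f x.
Proof.
  intros Hd. apply continuity_pt_filterlim, (ex_derive_continuous f x). now exists l.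
Qed.

(* Near x0 the derivative agrees with the differentiated power series. *)
Lemma real_analytic_R_derive_continuity_pt (f f' : R -> R) :
  real_analytic_R f -> (forall x, is_derive f x (f' x)) ->
  forall x0, continuity_pt f' x0.
Proof.
  intros Hf Hd x0. destruct (Hf x0) as [r [Hr [a Ha]]].
  pose proof (real_analytic_R_CV_radius f x0 r a Hr Ha) as Hcv.
  apply continuity_pt_ext_loc with (f := fun y => PSeries (PS_derive a) (y - x0)).
  - exists (mkposreal r Hr). intros y Hy. change (Rabs (y - x0) < r) in Hy.
    assert (Hloc : locally y (fun t => PSeries a (t - x0) = f t)).
    { exists (mkposreal (r - Rabs (y - x0)) ltac:(simpl; lra)).
      intros t Ht. change (Rabs (t - y) < r - Rabs (y - x0)) in Ht.
      apply is_pseries_unique, Ha.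
      replace (t - x0) with ((t - y) + (y - x0)) by ring.
      eapply Rle_lt_trans; [apply Rabs_triang|lra]. }
    assert (Hder : is_derive (fun t => PSeries a (t - x0)) y
                     (PSeries (PS_derive a) (y - x0))).
    { rewrite <- (scal_one (PSeries (PS_derive a) (y - x0))).
      apply (is_derive_comp (PSeries a) (fun t => t - x0)).
      - apply is_derive_PSeries. eapply Rbar_lt_le_trans; [|exact Hcv]. exact Hy.
      - auto_derive; auto. }
    apply is_derive_unique in Hder. rewrite <- Hder.
    apply is_derive_unique. eapply is_derive_ext_loc; [|apply Hd].
    eapply filter_imp; [|exact Hloc]. intros t Ht; now symmetry.
  - apply (continuity_pt_comp (fun y => y - x0) (PSeries (PS_derive a))); [reg|].
    apply PSeries_continuity. rewrite CV_radius_derive, Rminus_eq_0, Rabs_R0.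
    eapply Rbar_lt_le_trans; [|exact Hcv]. exact Hr.
Qed.

Lemma filterlim_C_fst (z : C) :
  filterlim (fun w : C_R_NormedModule => fst w) (locally z) (locally (fst z)).
Proof. intros P [e He]. exists e. intros w [Hw _]. now apply He. Qed.

Lemma filterlim_C_snd (z : C) :
  filterlim (fun w : C_R_NormedModule => snd w) (locally z) (locally (snd z)).
Proof. intros P [e He]. exists e. intros w [_ Hw]. now apply He. Qed.

Lemma is_pseries_C_components (a : nat -> C) (x : R) (l : C) :
  @is_pseries R_AbsRing C_R_NormedModule a x l ->
  is_pseries (fun n => fst (a n)) x (fst l) /\ is_pseries (fun n => snd (a n)) x (snd l).
Proof.
  unfold is_pseries, is_series. intros Hl. split.
  - eapply filterlim_ext; [|eapply filterlim_comp; [exact Hl|apply filterlim_C_fst]].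
    intros n. induction n as [|n IH]; rewrite ?sum_O, ?sum_Sn; simpl; [reflexivity|].
    rewrite <- IH; reflexivity.
  - eapply filterlim_ext; [|eapply filterlim_comp; [exact Hl|apply filterlim_C_snd]].
    intros n. induction n as [|n IH]; rewrite ?sum_O, ?sum_Sn; simpl; [reflexivity|].
    rewrite <- IH; reflexivity.
Qed.

Lemma is_derive_C_components (F : R -> C) (x : R) (l : C) :
  @is_derive R_AbsRing C_R_NormedModule F x l ->
  is_derive (fun y => fst (F y)) x (fst l) /\ is_derive (fun y => snd (F y)) x (snd l).
Proof.
  unfold is_derive. intros Hd. split.
  - eapply filterdiff_ext_lin;
      [apply (filterdiff_comp' F (fun z : C_R_NormedModule => fst z)); [exact Hd|]|];
      [apply filterdiff_linear, is_linear_fst | reflexivity].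
  - eapply filterdiff_ext_lin;
      [apply (filterdiff_comp' F (fun z : C_R_NormedModule => snd z)); [exact Hd|]|];
      [apply filterdiff_linear, is_linear_snd | reflexivity].
Qed.

Lemma real_analytic_components (F : R -> C) :
  real_analytic F ->
  real_analytic_R (fun x => Re (F x)) /\ real_analytic_R (fun x => Im (F x)).
Proof.
  intros HF. split; intros x0; destruct (HF x0) as [r [Hr [a Ha]]];
    exists r; split; auto.
  - exists (fun n => fst (a n)). intros x Hx.
    exact (proj1 (is_pseries_C_components a _ _ (Ha x Hx))).
  - exists (fun n => snd (a n)). intros x Hx.
    exact (proj2 (is_pseries_C_components a _ _ (Ha x Hx))).
Qed.

(* With h = h1 + i h2 and so on: if |h| = |g| <> 0 and r conj(h) = q conj(g),
   then q h = g r. *)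
Lemma cross_mul_eq_of_conj_mul_eq (h1 h2 g1 g2 r1 r2 q1 q2 : R) :
  0 < h1 ^ 2 + h2 ^ 2 -> h1 ^ 2 + h2 ^ 2 = g1 ^ 2 + g2 ^ 2 ->
  r1 * h1 + r2 * h2 = q1 * g1 + q2 * g2 -> r2 * h1 - r1 * h2 = q2 * g1 - q1 * g2 ->
  q1 * h1 - q2 * h2 = g1 * r1 - g2 * r2 /\ q1 * h2 + q2 * h1 = g1 * r2 + g2 * r1.
Proof.
  intros Hpos Hnorm Hre Him.
  set (X1 := q1 * h1 - q2 * h2 - (g1 * r1 - g2 * r2)).
  set (X2 := q1 * h2 + q2 * h1 - (g1 * r2 + g2 * r1)).
  assert (Y1 : h1 * X1 + h2 * X2 = 0).
  { unfold X1, X2.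
    transitivity (q1 * (h1 ^ 2 + h2 ^ 2 - (g1 ^ 2 + g2 ^ 2))
      - g1 * (r1 * h1 + r2 * h2 - (q1 * g1 + q2 * g2))
      + g2 * (r2 * h1 - r1 * h2 - (q2 * g1 - q1 * g2))); [ring|].
    rewrite Hnorm, Hre, Him. ring. }
  assert (Y2 : h1 * X2 - h2 * X1 = 0).
  { unfold X1, X2.
    transitivity (q2 * (h1 ^ 2 + h2 ^ 2 - (g1 ^ 2 + g2 ^ 2))
      - g2 * (r1 * h1 + r2 * h2 - (q1 * g1 + q2 * g2))
      - g1 * (r2 * h1 - r1 * h2 - (q2 * g1 - q1 * g2))); [ring|].
    rewrite Hnorm, Hre, Him. ring. }
  assert (E1 : X1 * (h1 ^ 2 + h2 ^ 2) = 0).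
  { transitivity (h1 * (h1 * X1 + h2 * X2) - h2 * (h1 * X2 - h2 * X1)); [ring|].
    rewrite Y1, Y2. ring. }
  assert (E2 : X2 * (h1 ^ 2 + h2 ^ 2) = 0).
  { transitivity (h2 * (h1 * X1 + h2 * X2) + h1 * (h1 * X2 - h2 * X1)); [ring|].
    rewrite Y1, Y2. ring. }
  apply Rmult_integral in E1, E2.
  destruct E1 as [E1|]; [|lra]. destruct E2 as [E2|]; [|lra].
  unfold X1, X2 in *. split; lra.
Qed.

(* The numerators of the derivatives of Re (g / h) and Im (g / h), written as
   g conj(h) / |h|^2, vanish as soon as q h = g r. *)
Lemma quotient_derive_numerators_eq0 (h1 h2 g1 g2 r1 r2 q1 q2 : R) :
  0 < h1 ^ 2 + h2 ^ 2 ->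
  q1 * h1 - q2 * h2 = g1 * r1 - g2 * r2 -> q1 * h2 + q2 * h1 = g1 * r2 + g2 * r1 ->
  (q1 * h1 + g1 * r1 + q2 * h2 + g2 * r2) * (h1 ^ 2 + h2 ^ 2)
    - (g1 * h1 + g2 * h2) * (2 * (r1 * h1 + r2 * h2)) = 0 /\
  (q2 * h1 + g2 * r1 - q1 * h2 - g1 * r2) * (h1 ^ 2 + h2 ^ 2)
    - (g2 * h1 - g1 * h2) * (2 * (r1 * h1 + r2 * h2)) = 0.
Proof.
  intros Hpos X1 X2. set (N := h1 ^ 2 + h2 ^ 2).
  assert (Q1 : q1 * N = h1 * (g1 * r1 - g2 * r2) + h2 * (g1 * r2 + g2 * r1))
    by (rewrite <- X1, <- X2; unfold N; ring).
  assert (Q2 : q2 * N = h1 * (g1 * r2 + g2 * r1) - h2 * (g1 * r1 - g2 * r2))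
    by (rewrite <- X1, <- X2; unfold N; ring).
  split; apply (Rmult_eq_reg_r N); try (unfold N; lra).
  - transitivity (h1 * N * (q1 * N) + h2 * N * (q2 * N) + (g1 * r1 + g2 * r2) * N ^ 2
      - (g1 * h1 + g2 * h2) * (2 * (r1 * h1 + r2 * h2)) * N); [unfold N; ring|].
    rewrite Q1, Q2. unfold N. ring.
  - transitivity (h1 * N * (q2 * N) - h2 * N * (q1 * N) + (g2 * r1 - g1 * r2) * N ^ 2
      - (g2 * h1 - g1 * h2) * (2 * (r1 * h1 + r2 * h2)) * N); [unfold N; ring|].
    rewrite Q1, Q2. unfold N. ring.
Qed.

Lemma is_derive_zero_const_on_interval (u : R -> R) (a b : R) :
  (forall x, a < x < b -> is_derive u x 0) ->
  forall x y, a < x < b -> a < y < b -> u x = u y.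
Proof.
  intros Hu x y Hx Hy. destruct (Rtotal_order x y) as [Hlt|[->|Hlt]]; auto.
  - apply eq_is_derive; auto. intros t Ht. apply Hu. lra.
  - symmetry. apply eq_is_derive; auto. intros t Ht. apply Hu. lra.
Qed.

(* The witness c is the quotient g / h, which has zero derivative on (a, b). *)
Lemma rotation_on_interval (h1 h2 g1 g2 r1 r2 q1 q2 : R -> R) (a b : R) :
  a < b ->
  (forall x, is_derive h1 x (r1 x)) -> (forall x, is_derive h2 x (r2 x)) ->
  (forall x, is_derive g1 x (q1 x)) -> (forall x, is_derive g2 x (q2 x)) ->
  (forall x, a < x < b -> 0 < h1 x ^ 2 + h2 x ^ 2) ->
  (forall x, a < x < b -> h1 x ^ 2 + h2 x ^ 2 = g1 x ^ 2 + g2 x ^ 2) ->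
  (forall x, a < x < b -> r1 x * h1 x + r2 x * h2 x = q1 x * g1 x + q2 x * g2 x) ->
  (forall x, a < x < b -> r2 x * h1 x - r1 x * h2 x = q2 x * g1 x - q1 x * g2 x) ->
  exists c1 c2, c1 ^ 2 + c2 ^ 2 = 1 /\ forall x, a < x < b ->
    g1 x = c1 * h1 x - c2 * h2 x /\ g2 x = c1 * h2 x + c2 * h1 x.
Proof.
  intros Hab Dh1 Dh2 Dg1 Dg2 Hpos Hnorm Hre Him.
  set (u1 := fun x => (g1 x * h1 x + g2 x * h2 x) / (h1 x ^ 2 + h2 x ^ 2)).
  set (u2 := fun x => (g2 x * h1 x - g1 x * h2 x) / (h1 x ^ 2 + h2 x ^ 2)).
  assert (Du : forall x, a < x < b -> is_derive u1 x 0 /\ is_derive u2 x 0).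
  { intros x Hx. specialize (Hpos x Hx).
    destruct (cross_mul_eq_of_conj_mul_eq (h1 x) (h2 x) (g1 x) (g2 x) (r1 x) (r2 x)
                (q1 x) (q2 x) Hpos (Hnorm x Hx) (Hre x Hx) (Him x Hx)) as [X1 X2].
    destruct (quotient_derive_numerators_eq0 (h1 x) (h2 x) (g1 x) (g2 x) (r1 x) (r2 x)
                (q1 x) (q2 x) Hpos X1 X2) as [A1 A2].
    assert (E1 : Derive (fun t => h1 t) x = r1 x)
      by exact (is_derive_unique _ _ _ (Dh1 x)).
    assert (E2 : Derive (fun t => h2 t) x = r2 x)
      by exact (is_derive_unique _ _ _ (Dh2 x)).
    assert (E3 : Derive (fun t => g1 t) x = q1 x)
      by exact (is_derive_unique _ _ _ (Dg1 x)).
    assert (E4 : Derive (fun t => g2 t) x = q2 x)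
      by exact (is_derive_unique _ _ _ (Dg2 x)).
    assert (x1 : ex_derive h1 x) by (eexists; apply Dh1).
    assert (x2 : ex_derive h2 x) by (eexists; apply Dh2).
    assert (x3 : ex_derive g1 x) by (eexists; apply Dg1).
    assert (x4 : ex_derive g2 x) by (eexists; apply Dg2).
    split; unfold u1, u2; auto_derive; repeat split; auto; try lra;
      rewrite E1, E2, E3, E4.
    - transitivity (((q1 x * h1 x + g1 x * r1 x + q2 x * h2 x + g2 x * r2 x)
          * (h1 x ^ 2 + h2 x ^ 2) - (g1 x * h1 x + g2 x * h2 x)
          * (2 * (r1 x * h1 x + r2 x * h2 x))) / (h1 x ^ 2 + h2 x ^ 2) ^ 2);
        [field; lra|].
      rewrite A1. unfold Rdiv. ring.
    - transitivity (((q2 x * h1 x + g2 x * r1 x - q1 x * h2 x - g1 x * r2 x)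
          * (h1 x ^ 2 + h2 x ^ 2) - (g2 x * h1 x - g1 x * h2 x)
          * (2 * (r1 x * h1 x + r2 x * h2 x))) / (h1 x ^ 2 + h2 x ^ 2) ^ 2);
        [field; lra|].
      rewrite A2. unfold Rdiv. ring. }
  set (m := (a + b) / 2). assert (Hm : a < m < b) by (unfold m; lra).
  pose proof (is_derive_zero_const_on_interval u1 a b (fun x Hx => proj1 (Du x Hx))) as Hu1.
  pose proof (is_derive_zero_const_on_interval u2 a b (fun x Hx => proj2 (Du x Hx))) as Hu2.
  exists (u1 m), (u2 m). split.
  - specialize (Hpos m Hm). unfold u1, u2.
    transitivity ((g1 m ^ 2 + g2 m ^ 2) * (h1 m ^ 2 + h2 m ^ 2)
      / (h1 m ^ 2 + h2 m ^ 2) ^ 2); [field; lra|].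
    rewrite <- (Hnorm m Hm). field. lra.
  - intros x Hx. rewrite (Hu1 m x Hm Hx), (Hu2 m x Hm Hx).
    specialize (Hpos x Hx). unfold u1, u2. split; field; lra.
Qed.

Lemma square_eq_sign_interval (phi psi : R -> R) (a b : R) :
  a < b -> (forall x, continuity_pt phi x) -> (forall x, continuity_pt psi x) ->
  (forall x, phi x ^ 2 = psi x ^ 2) ->
  exists a' b' s, a <= a' < b' /\ b' <= b /\ (s = 1 \/ s = -1) /\
    forall x, a' < x < b' -> phi x = s * psi x.
Proof.
  intros Hab Cphi Cpsi Hsq.
  destruct (classic (exists y, a < y < b /\ phi y <> 0)) as [[y [Hy Hphi]]|Hzero].
  - assert (Hs : exists s, (s = 1 \/ s = -1) /\ phi y + s * psi y <> 0).
    { destruct (Req_dec (phi y + 1 * psi y) 0).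
      - exists (-1). split; [now right|lra].
      - exists 1. split; [now left|auto]. }
    destruct Hs as [s [Hs Hnz]].
    destruct (continuity_pt_nonzero_near (fun t => phi t + s * psi t) y) as [e [He Hnear]];
      auto.
    { apply continuity_pt_plus; [|apply continuity_pt_scal]; auto. }
    exists (Rmax a (y - e)), (Rmin b (y + e)), s.
    generalize (Rmax_l a (y - e)) (Rmax_r a (y - e)) (Rmin_l b (y + e)) (Rmin_r b (y + e)).
    intros M1 M2 M3 M4.
    split; [split; [lra|apply Rmax_case; apply Rmin_case; lra]|].
    split; [lra|]. split; [exact Hs|].
    intros x Hx.
    assert (Hprod : (phi x - s * psi x) * (phi x + s * psi x) = 0).
    { transitivity (phi x ^ 2 - s ^ 2 * psi x ^ 2); [ring|].
      rewrite Hsq. destruct Hs as [-> | ->]; ring. }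
    apply Rmult_integral in Hprod. destruct Hprod as [|Habs]; [lra|].
    exfalso. apply (Hnear x); [apply Rabs_def1; lra|exact Habs].
  - exists a, b, 1. repeat split; try lra.
    intros x Hx.
    assert (Hphi : phi x = 0) by (apply NNPP; intros Hne; apply Hzero; eauto).
    pose proof (Hsq x) as Hx2. rewrite Hphi in Hx2. nra.
Qed.

Lemma is_derive_norm_sq (h1 h2 : R -> R) (r1 r2 x : R) :
  is_derive h1 x r1 -> is_derive h2 x r2 ->
  is_derive (fun t => h1 t ^ 2 + h2 t ^ 2) x (2 * (r1 * h1 x + r2 * h2 x)).
Proof.
  intros D1 D2.
  assert (E1 : Derive (fun t => h1 t) x = r1) by exact (is_derive_unique _ _ _ D1).
  assert (E2 : Derive (fun t => h2 t) x = r2) by exact (is_derive_unique _ _ _ D2).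
  assert (x1 : ex_derive h1 x) by (eexists; apply D1).
  assert (x2 : ex_derive h2 x) by (eexists; apply D2).
  auto_derive; auto. rewrite E1, E2. ring.
Qed.

Lemma dot_eq_of_norm_sq_eq (f1 f2 g1 g2 p1 p2 q1 q2 : R -> R) :
  (forall x, is_derive f1 x (p1 x)) -> (forall x, is_derive f2 x (p2 x)) ->
  (forall x, is_derive g1 x (q1 x)) -> (forall x, is_derive g2 x (q2 x)) ->
  (forall x, f1 x ^ 2 + f2 x ^ 2 = g1 x ^ 2 + g2 x ^ 2) ->
  forall x, p1 x * f1 x + p2 x * f2 x = q1 x * g1 x + q2 x * g2 x.
Proof.
  intros Df1 Df2 Dg1 Dg2 Hnorm x.
  pose proof (is_derive_norm_sq f1 f2 _ _ x (Df1 x) (Df2 x)) as Hf.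
  pose proof (is_derive_norm_sq g1 g2 _ _ x (Dg1 x) (Dg2 x)) as Hg.
  apply (is_derive_ext _ _ x _ Hnorm) in Hf.
  assert (Heq : 2 * (p1 x * f1 x + p2 x * f2 x) = 2 * (q1 x * g1 x + q2 x * g2 x))
    by (rewrite <- (is_derive_unique _ _ _ Hf); exact (is_derive_unique _ _ _ Hg)).
  lra.
Qed.

Lemma real_analytic_R_rotation_extends (h1 h2 g1 g2 : R -> R) (a b c1 c2 : R) :
  real_analytic_R h1 -> real_analytic_R h2 ->
  real_analytic_R g1 -> real_analytic_R g2 -> a < b ->
  (forall x, a < x < b -> g1 x = c1 * h1 x - c2 * h2 x /\ g2 x = c1 * h2 x + c2 * h1 x) ->
  forall x, g1 x = c1 * h1 x - c2 * h2 x /\ g2 x = c1 * h2 x + c2 * h1 x.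
Proof.
  intros Rh1 Rh2 Rg1 Rg2 Hab Hrot.
  assert (E1 : forall x, g1 x + (- c1) * h1 x + c2 * h2 x = 0).
  { apply (real_analytic_R_identity (fun x => g1 x + (- c1) * h1 x + c2 * h2 x) a b); auto.
    - repeat apply real_analytic_R_plus; try apply real_analytic_R_scal; auto.
    - intros y Hy. destruct (Hrot y Hy) as [-> _]. ring. }
  assert (E2 : forall x, g2 x + (- c1) * h2 x + (- c2) * h1 x = 0).
  { apply (real_analytic_R_identity (fun x => g2 x + (- c1) * h2 x + (- c2) * h1 x) a b); auto.
    - repeat apply real_analytic_R_plus; try apply real_analytic_R_scal; auto.
    - intros y Hy. destruct (Hrot y Hy) as [_ ->]. ring. }
  intros x. specialize (E1 x). specialize (E2 x). split; lra.
Qed.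

Lemma cross_sq_eq_of_dot_eq (f1 f2 g1 g2 p1 p2 q1 q2 : R) :
  f1 ^ 2 + f2 ^ 2 = g1 ^ 2 + g2 ^ 2 -> p1 ^ 2 + p2 ^ 2 = q1 ^ 2 + q2 ^ 2 ->
  p1 * f1 + p2 * f2 = q1 * g1 + q2 * g2 ->
  (p2 * f1 - p1 * f2) ^ 2 = (q2 * g1 - q1 * g2) ^ 2.
Proof.
  intros Hnorm Hnorm' Hdot.
  transitivity ((p1 ^ 2 + p2 ^ 2) * (f1 ^ 2 + f2 ^ 2) - (p1 * f1 + p2 * f2) ^ 2); [ring|].
  rewrite Hnorm, Hnorm', Hdot. ring.
Qed.

Lemma real_analytic_R_cross_continuity_pt (h1 h2 r1 r2 : R -> R) :
  real_analytic_R h1 -> real_analytic_R h2 ->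
  (forall x, is_derive h1 x (r1 x)) -> (forall x, is_derive h2 x (r2 x)) ->
  forall x, continuity_pt (fun t => r2 t * h1 t - r1 t * h2 t) x.
Proof.
  intros Rh1 Rh2 Dh1 Dh2 x.
  apply continuity_pt_minus; apply continuity_pt_mult;
    eauto using real_analytic_R_derive_continuity_pt, is_derive_continuity_pt.
Qed.

(* The sign s = -1 corresponds to comparing G with conj F. *)
Lemma real_analytic_R_rotation_of_nonzero (f1 f2 g1 g2 p1 p2 q1 q2 : R -> R) (x0 : R) :
  real_analytic_R f1 -> real_analytic_R f2 ->
  real_analytic_R g1 -> real_analytic_R g2 ->
  (forall x, is_derive f1 x (p1 x)) -> (forall x, is_derive f2 x (p2 x)) ->
  (forall x, is_derive g1 x (q1 x)) -> (forall x, is_derive g2 x (q2 x)) ->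
  (forall x, f1 x ^ 2 + f2 x ^ 2 = g1 x ^ 2 + g2 x ^ 2) ->
  (forall x, p1 x ^ 2 + p2 x ^ 2 = q1 x ^ 2 + q2 x ^ 2) ->
  f1 x0 ^ 2 + f2 x0 ^ 2 <> 0 ->
  exists c1 c2 s, c1 ^ 2 + c2 ^ 2 = 1 /\ (s = 1 \/ s = -1) /\
    forall x, g1 x = c1 * f1 x - c2 * (s * f2 x) /\ g2 x = c1 * (s * f2 x) + c2 * f1 x.
Proof.
  intros Rf1 Rf2 Rg1 Rg2 Df1 Df2 Dg1 Dg2 Hnorm Hnorm' Hx0.
  destruct (continuity_pt_nonzero_near (fun t => f1 t ^ 2 + f2 t ^ 2) x0) as [d [Hd Hnear]];
    auto.
  { exact (is_derive_continuity_pt _ _ _ (is_derive_norm_sq _ _ _ _ x0 (Df1 x0) (Df2 x0))). }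
  pose proof (dot_eq_of_norm_sq_eq _ _ _ _ _ _ _ _ Df1 Df2 Dg1 Dg2 Hnorm) as Hdot.
  destruct (square_eq_sign_interval (fun x => p2 x * f1 x - p1 x * f2 x)
              (fun x => q2 x * g1 x - q1 x * g2 x) (x0 - d) (x0 + d))
    as [a [b [s [Ha [Hb [Hs Hsign]]]]]];
    [lra | apply real_analytic_R_cross_continuity_pt; auto..
    | intros x; apply cross_sq_eq_of_dot_eq; auto |].
  assert (Hs2 : forall y, s * (s * y) = y) by (intros y; destruct Hs as [-> | ->]; ring).
  destruct (rotation_on_interval f1 (fun x => s * f2 x) g1 g2 p1 (fun x => s * p2 x) q1 q2 a b)
    as [c1 [c2 [Hc Hrot]]]; auto.
  - apply Ha.
  - intros x. now apply is_derive_scal.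
  - intros x Hx. specialize (Hnear x ltac:(apply Rabs_def1; lra)).
    replace ((s * f2 x) ^ 2) with (s * (s * f2 x ^ 2)) by ring. rewrite Hs2. nra.
  - intros x Hx. replace ((s * f2 x) ^ 2) with (s * (s * f2 x ^ 2)) by ring. now rewrite Hs2.
  - intros x Hx. replace (s * p2 x * (s * f2 x)) with (s * (s * (p2 x * f2 x))) by ring.
    now rewrite Hs2.
  - intros x Hx. specialize (Hsign x Hx). simpl in Hsign.
    replace (s * p2 x * f1 x - p1 x * (s * f2 x)) with (s * (p2 x * f1 x - p1 x * f2 x))
      by ring.
    now rewrite Hsign, Hs2.
  - exists c1, c2, s. repeat split; auto;
      apply (real_analytic_R_rotation_extends f1 (fun x => s * f2 x) g1 g2 a b);
      solve [apply Ha | auto using real_analytic_R_scal].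
Qed.

Lemma real_analytic_R_rotation (f1 f2 g1 g2 p1 p2 q1 q2 : R -> R) :
  real_analytic_R f1 -> real_analytic_R f2 ->
  real_analytic_R g1 -> real_analytic_R g2 ->
  (forall x, is_derive f1 x (p1 x)) -> (forall x, is_derive f2 x (p2 x)) ->
  (forall x, is_derive g1 x (q1 x)) -> (forall x, is_derive g2 x (q2 x)) ->
  (forall x, f1 x ^ 2 + f2 x ^ 2 = g1 x ^ 2 + g2 x ^ 2) ->
  (forall x, p1 x ^ 2 + p2 x ^ 2 = q1 x ^ 2 + q2 x ^ 2) ->
  exists c1 c2 s, c1 ^ 2 + c2 ^ 2 = 1 /\ (s = 1 \/ s = -1) /\
    forall x, g1 x = c1 * f1 x - c2 * (s * f2 x) /\ g2 x = c1 * (s * f2 x) + c2 * f1 x.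
Proof.
  intros Rf1 Rf2 Rg1 Rg2 Df1 Df2 Dg1 Dg2 Hnorm Hnorm'.
  destruct (classic (forall x, f1 x ^ 2 + f2 x ^ 2 = 0)) as [Hzero|Hnz].
  - exists 1, 0, 1. split; [ring|]. split; [now left|].
    intros x. pose proof (Hzero x) as Hf. pose proof Hf as Hg. rewrite Hnorm in Hg.
    assert (f1 x = 0 /\ f2 x = 0 /\ g1 x = 0 /\ g2 x = 0) by nra.
    split; lra.
  - apply not_all_ex_not in Hnz. destruct Hnz as [x0 Hx0].
    now apply (real_analytic_R_rotation_of_nonzero f1 f2 g1 g2 p1 p2 q1 q2 x0).
Qed.

Theorem mainTheorem5 (F G F' G' : R -> C) :
  real_analytic F -> real_analytic G ->
  (forall x : R, has_derivative_C F x (F' x)) ->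
  (forall x : R, has_derivative_C G x (G' x)) ->
  (forall x : R, Cmod (F x) = Cmod (G x)) ->
  (forall x : R, Cmod (F' x) = Cmod (G' x)) ->
  exists c : C, Cmod c = 1%R /\
    ((forall x : R, G x = (c * F x)%C) \/
     (forall x : R, G x = (c * Cconj (F x))%C)).
Proof.
  intros HF HG DF DG Hmod Hmod'.
  destruct (real_analytic_components F HF) as [RF1 RF2].
  destruct (real_analytic_components G HG) as [RG1 RG2].
  destruct (real_analytic_R_rotation (fun x => Re (F x)) (fun x => Im (F x))
              (fun x => Re (G x)) (fun x => Im (G x)) (fun x => Re (F' x))
              (fun x => Im (F' x)) (fun x => Re (G' x)) (fun x => Im (G' x)))
    as [c1 [c2 [s [Hc [Hs Hrot]]]]]; auto;
    try (intros x; apply (is_derive_C_components _ x); first [apply DF | apply DG]);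
    try (intros x; rewrite <- !Cmod2_alt; congruence).
  exists (c1, c2). split.
  - change (sqrt (c1 ^ 2 + c2 ^ 2) = 1). rewrite Hc. apply sqrt_1.
  - destruct Hs as [-> | ->]; [left | right]; intros x; destruct (Hrot x) as [H1 H2];
      unfold Re, Im in H1, H2; apply injective_projections; simpl; lra.
Qed.
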